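(* Let $G$ be a non-empty finite simple graph and $\pi$ a clique vertex-partition of $G$, with $d=\#\pi$. Then for every $0\le i\le d$, $h_i(\mathrm{Ind}(G^\pi))=f_{i-1}(\mathrm{Ind}(G))$, where $f_{i-1}(\mathrm{Ind}(G))$ is the number of independent sets of size $i$ in $G$ (and is $0$ if there are none). That is, the $h$-vector of $\mathrm{Ind}(G^\pi)$ is the face vector of $\mathrm{Ind}(G)$ (padded with zeros).
   Context: $\mathrm{Ind}(G)$ is the simplicial complex whose faces are the independent sets of $G$. A clique vertex-partition of $G=(V,E)$ is a set $\pi=\{W_1,\ldots,W_t\}$ of pairwise disjoint (possibly empty) cliques of $G$ whose union is $V$; $G^\pi$ is the graph with vertex set $V\cup\{w_1,\ldots,w_t\}$ ($w_i$ new) and edge set $E\cup\{vw_i : v\in W_i\}$. For a $(d-1)$-dimensional simplicial complex $\Delta$, the face vector is $(f_{-1},\ldots,f_{d-1})$ with $f_i$ the number of faces of cardinality $i+1$ (so $f_{-1}=1$), and the $h$-vector is $(h_0,\ldots,h_d)$ with $h_j=\sum_{i=0}^{j}(-1)^{j-i}\binom{d-i}{j-i}f_{i-1}$. *)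

From mathcomp Require Import all_boot all_order all_algebra.
Set Implicit Arguments. Unset Strict Implicit. Unset Printing Implicit Defensive.
Import GRing.Theory Num.Theory.

Definition simple_graph (V : finType) (e : rel V) : Prop :=
  symmetric e /\ irreflexive e.

Definition independent (V : finType) (e : rel V) (A : {set V}) : bool :=
  [forall x in A, forall y in A, ~~ e x y].

Definition is_clique (V : finType) (e : rel V) (W : {set V}) : bool :=
  [forall x in W, forall y in W, (x != y) ==> e x y].

(* pi = {W_1,...,W_d} : indexed family of pairwise disjoint (possibly empty)
   cliques covering V. *)
Definition clique_vertex_partition (V : finType) (e : rel V) (d : nat)
    (W : 'I_d -> {set V}) : Prop :=
  [/\ forall i, is_clique e (W i),
      forall i j, i != j -> [disjoint W i & W j]
    & \bigcup_(i < d) W i = [set: V]].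

(* G^pi : vertex set V + {w_1..w_d}, edges E plus v w_i for v in W_i. *)
Definition gpi_rel (V : finType) (e : rel V) (d : nat) (W : 'I_d -> {set V})
    : rel (V + 'I_d)%type :=
  fun a b =>
    match a, b with
    | inl u, inl v => e u v
    | inl v, inr i => v \in W i
    | inr i, inl v => v \in W i
    | inr _, inr _ => false
    end.

(* f_{i-1}(Ind G) = number of independent sets of cardinality i. *)
Definition fcount (V : finType) (e : rel V) (i : nat) : nat :=
  #|[set A : {set V} | independent e A & #|A| == i]|.

(* dim Ind(G) + 1 = maximum size of an independent set. *)
Definition ind_d (V : finType) (e : rel V) : nat :=
  \max_(A : {set V} | independent e A) #|A|.

Definition hvec (V : finType) (e : rel V) (j : nat) : int :=
  \sum_(i < j.+1)
     (-1) ^+ (j - i) * ('C(ind_d e - i, j - i))%:Z * (fcount e i)%:Z.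

(* An independent set of G^pi is an independent set A of G together with a set of
   new vertices w_i whose cliques W_i avoid A.  An independent set meets each clique
   in at most one vertex, so A avoids exactly d - |A| of the cliques; hence
   f_{k-1}(Ind G^pi) = sum_A C(d - |A|, k - |A|) over independent A, and
   dim Ind(G^pi) + 1 = d.  Substituting into the definition of the h-vector, the
   coefficient of each A collapses to the alternating sum
   sum_m (-1)^(J-m) C(N-m, J-m) C(N, m) = C(N, J) (1 - 1)^J = [J = 0]. *)
From Stdlib Require Import Lia.
From mathcomp Require Import all_boot all_order all_algebra.
Set Implicit Arguments. Unset Strict Implicit. Unset Printing Implicit Defensive.
Import GRing.Theory.

Section SumSets.
Variables T1 T2 : finType.

Definition setsum (A : {set T1}) (B : {set T2}) : {set T1 + T2} :=
  inl @: A :|: inr @: B.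

Lemma mem_setsum_inl A B x : (inl x \in setsum A B) = (x \in A).
Proof.
rewrite in_setU mem_imset; last by move=> ? ? [].
by case: (x \in A) => //=; apply/imsetP => -[].
Qed.

Lemma mem_setsum_inr A B x : (inr x \in setsum A B) = (x \in B).
Proof.
rewrite in_setU (mem_imset (f := inr)); last by move=> ? ? [].
by rewrite orbC; case: (x \in B) => //=; apply/imsetP => -[].
Qed.

Definition mem_setsum := (mem_setsum_inl, mem_setsum_inr).

Lemma setsumK (C : {set T1 + T2}) : setsum (inl @^-1: C) (inr @^-1: C) = C.
Proof. by apply/setP => -[x|x]; rewrite mem_setsum inE. Qed.

Lemma card_setsum A B : #|setsum A B| = #|A| + #|B|.
Proof.
rewrite cardsU !card_imset; try by move=> ? ? [].
suff /eqP -> : inl @: A :&: inr @: B == set0 by rewrite cards0 subn0.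
rewrite setI_eq0; apply/pred0P => -[x|x] /=;
  by apply/negP => /andP[/imsetP[? _ ?] /imsetP[? _ ?]].
Qed.

Lemma sum_setsum (F : {set T1 + T2} -> nat) :
  \sum_C F C = \sum_A \sum_B F (setsum A B).
Proof.
rewrite pair_bigA /= (reindex (fun p => setsum p.1 p.2)) //.
exists (fun C : {set T1 + T2} => (inl @^-1: C, inr @^-1: C)) => [[A B] _|C _].
  by congr pair; apply/setP => x; rewrite inE mem_setsum.
exact: setsumK.
Qed.

End SumSets.

Lemma independentP (T : finType) (r : rel T) (A : {set T}) :
  reflect {in A &, forall x y, ~~ r x y} (independent r A).
Proof.
apply: (iffP forallP) => [rA x y xA yA | rA x].
  by have /implyP/(_ xA)/forallP/(_ y)/implyP/(_ yA) := rA x.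
by apply/implyP => xA; apply/forallP => y; apply/implyP; apply: rA.
Qed.

Lemma fcountE (T : finType) (r : rel T) k :
  fcount r k = \sum_(A | independent r A) (#|A| == k).
Proof.
rewrite /fcount -(sum1dep_card (fun A => independent r A && (#|A| == k))).
by rewrite big_mkcond [RHS]big_mkcond; apply: eq_bigr => A _; case: (independent r A).
Qed.

Lemma card_clique_independent_le1 (T : finType) (r : rel T) (A W : {set T}) :
  is_clique r W -> independent r A -> #|A :&: W| <= 1.
Proof.
move=> /forallP clW /independentP indA; apply/card_le1_eqP => x y.
rewrite !inE => /andP[xA xW] /andP[yA yW]; apply/eqP; apply: contraT; rewrite eq_sym => xy.
have /implyP/(_ xW)/forallP/(_ y)/implyP/(_ yW)/implyP/(_ xy) := clW x.
by rewrite (negbTE (indA x y xA yA)).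
Qed.

Section CliquePartition.
Variables (V : finType) (e : rel V) (d : nat) (W : 'I_d -> {set V}).

Definition blocks_avoiding (A : {set V}) : {set 'I_d} := [set i | [disjoint W i & A]].

Lemma independent_gpi A S :
  independent (gpi_rel e W) (setsum A S) = independent e A && (S \subset blocks_avoiding A).
Proof.
apply/independentP/andP => [indAS | [/independentP indA /subsetP SA]].
  split.
    by apply/independentP => x y xA yA; apply: (indAS (inl x) (inl y)); rewrite mem_setsum.
  apply/subsetP => i iS; rewrite inE; apply/pred0P => v /=; apply/negP => /andP[vW vA].
  by have := indAS (inr i) (inl v); rewrite !mem_setsum /= vW => /(_ iS vA).
have notin_chosen_block i v : i \in S -> v \in A -> v \in W i = false.
  by move=> /SA; rewrite inE => /pred0P/(_ v) /= + vA; rewrite vA andbT.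
by move=> [x|x] [y|y]; rewrite !mem_setsum //=; [apply: indA | move=> ? ? | move=> ? ?];
  rewrite notin_chosen_block.
Qed.

Hypothesis piW : clique_vertex_partition e W.

Lemma sum_mem_blocks v : \sum_i (v \in W i) = 1.
Proof.
case: piW => _ disjW covW.
have /bigcupP[i _ vWi] : v \in \bigcup_i W i by rewrite covW inE.
rewrite (bigD1 i) //= vWi big1 // => j ji; apply/eqP; rewrite eqb0; apply/negP => vWj.
by have /pred0P/(_ v) := disjW _ _ ji; rewrite /= vWj vWi.
Qed.

Lemma card_blocks (A : {set V}) : #|A| = \sum_i #|A :&: W i|.
Proof.
rewrite -sum1_card (eq_bigr _ (fun v _ => esym (sum_mem_blocks v))) exchange_big /=.
apply: eq_bigr => i _; rewrite -sum1_card big_mkcond [RHS]big_mkcond /=.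
by apply: eq_bigr => v _; rewrite inE; case: (v \in A).
Qed.

Lemma card_blocks_avoiding A : independent e A -> #|blocks_avoiding A| + #|A| = d.
Proof.
case: piW => cliqueW _ _ indA.
have meet_block i : #|A :&: W i| = ~~ [disjoint W i & A].
  rewrite -setI_eq0 -cards_eq0 [W i :&: A]setIC.
  by case: #|_| (card_clique_independent_le1 (cliqueW i) indA) => [|[]].
rewrite card_blocks (eq_bigr _ (fun i _ => meet_block i)).
rewrite /blocks_avoiding -sum1dep_card big_mkcond -big_split /=.
by rewrite -[RHS]card_ord -sum1_card; apply: eq_bigr => i _; case: [disjoint _ & _].
Qed.

Lemma fcount_gpi k :
  fcount (gpi_rel e W) k =
  \sum_(A | independent e A) (#|A| <= k) * 'C(d - #|A|, k - #|A|).
Proof.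
rewrite fcountE big_mkcond sum_setsum [RHS]big_mkcond; apply: eq_bigr => A _.
under eq_bigr do rewrite independent_gpi card_setsum.
case: (boolP (independent e A)) => /= [indA|_]; last by rewrite big1.
rewrite -[in d - _](card_blocks_avoiding indA) addnK.
case: leqP => [leAk|ltkA]; last first.
  by rewrite big1 // => S _; rewrite gtn_eqF ?if_same // (leq_trans ltkA) ?leq_addr.
rewrite mul1n -cards_draws -sum1dep_card [RHS]big_mkcond; apply: eq_bigr => S _.
by case: (S \subset _); rewrite //= -{1}(subnKC leAk) eqn_add2l; case: (_ == _).
Qed.

Lemma ind_d_gpi : ind_d (gpi_rel e W) = d.
Proof.
apply/eqP; rewrite eqn_leq; apply/andP; split.
  apply/bigmax_leqP => C; rewrite -(setsumK C) independent_gpi card_setsum.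
  case/andP => indA /subset_leq_card SA.
  by rewrite -[leqRHS](card_blocks_avoiding indA) addnC leq_add2r.
have indT : independent (gpi_rel e W) (setsum set0 setT).
  rewrite independent_gpi; apply/andP; split.
    by apply/independentP => x y; rewrite inE.
  by apply/subsetP => i _; rewrite inE -setI_eq0 setI0.
by apply: leq_trans (leq_bigmax_cond _ indT); rewrite card_setsum cards0 cardsT card_ord.
Qed.

End CliquePartition.

Lemma bin_trinomial N J I : I <= J -> J <= N ->
  'C(N - I, J - I) * 'C(N, I) = 'C(N, J) * 'C(J, I).
Proof.
move=> leIJ leJN; have leIN := leq_trans leIJ leJN.
have facts_gt0 : 0 < I`! * (J - I)`! * (N - J)`! by rewrite !muln_gt0 !fact_gt0.
apply/eqP; rewrite -(eqn_pmul2r facts_gt0); apply/eqP.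
have subIJN : N - I - (J - I) = N - J by rewrite subnBA // subnK.
have := bin_fact (leq_sub2r I leJN); rewrite subIJN.
have := bin_fact leIN; have := bin_fact leIJ; have := bin_fact leJN.
rewrite -!multE; lia.
Qed.

Local Open Scope ring_scope.

Section AlternatingSums.
Variable R : comPzRingType.

Lemma sum_alt_bin J : \sum_(m < J.+1) (-1) ^+ (J - m) * 'C(J, m)%:R = (J == 0)%:R :> R.
Proof.
have -> : (J == 0)%:R = (-1 + 1) ^+ J :> R by rewrite addNr expr0n.
rewrite exprDn; apply: eq_bigr => m _.
by rewrite expr1n mulr1 mulr_natr.
Qed.

Lemma sum_alt_bin_trinomial N J : (J <= N)%N ->
  \sum_(m < J.+1) (-1) ^+ (J - m) * 'C(N - m, J - m)%:R * 'C(N, m)%:R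
    = (J == 0)%:R :> R.
Proof.
move=> leJN.
under eq_bigr => m _ do
  rewrite -mulrA -natrM (@bin_trinomial N J m (ltn_ord m) leJN) natrM mulrCA.
by rewrite -mulr_sumr sum_alt_bin; case: J leJN => [|J] _; rewrite ?bin0 ?mulr1 ?mulr0.
Qed.

Lemma sum_alt_bin_shifted d j a : (j <= d)%N ->
  \sum_(i < j.+1)
      (-1) ^+ (j - i) * 'C(d - i, j - i)%:R * ((a <= i)%N * 'C(d - a, i - a))%:R
    = (a == j)%:R :> R.
Proof.
move=> lejd; case: (leqP a j) => [leaj|ltja]; last first.
  rewrite big1 ?gtn_eqF // => i _.
  by rewrite leqNgt (leq_trans _ ltja) ?ltn_ord ?mul0n ?mulr0.
pose F i : R :=
  (-1) ^+ (j - i) * 'C(d - i, j - i)%:R * ((a <= i)%N * 'C(d - a, i - a))%:R.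
rewrite -(big_mkord xpredT F) (big_cat_nat (n := a)) ?leqW //= big_nat big1 ?add0r.
  rewrite -{1}[a]add0n big_addn subSn // big_mkord eqn_leq leaj -subn_eq0.
  rewrite -(@sum_alt_bin_trinomial (d - a)) ?leq_sub2r //; apply: eq_bigr => m _.
  by rewrite /F leq_addl addnK mul1n addnC !subnDA.
by move=> i /andP[_ ltia]; rewrite /F leqNgt ltia mul0n mulr0.
Qed.

End AlternatingSums.

Theorem proposition3p5 (V : finType) (e : rel V) (d : nat) (W : 'I_d -> {set V}) :
  simple_graph e -> (0 < #|V|)%N -> clique_vertex_partition e W ->
  forall i : nat, (i <= d)%N ->
    hvec (gpi_rel e W) i = Posz (fcount e i).
Proof.
move=> _ _ piW j lejd.
rewrite /hvec (ind_d_gpi piW).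
under eq_bigr do rewrite (fcount_gpi piW) -!natz natr_sum mulr_sumr.
rewrite exchange_big fcountE -natz natr_sum; apply: eq_bigr => A _.
exact: sum_alt_bin_shifted.
Qed.
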